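(* Let $\mathbf G$ be a finite oriented metric graph with Dirac operator data as in the context, let $\Lambda$ be a linear relation in the vertex space $\mathcal F$ and $\overline\Lambda=\{(\overline f,\overline{f'}):(f,f')\in\Lambda\}$ (componentwise complex conjugation). For a linear relation $\Theta$ in $\mathcal F$ let $D^{\Theta_W}$ be the restriction of $D^{max}$ to $\{\Phi\in\widetilde H^1(\mathbf G;\mathbb C^2):(W\Gamma^1\Phi,W\Gamma^2\Phi)\in\Theta\}$. Let $T:\mathscr H\to\mathscr H$ be the antilinear map $T\Phi=(\sigma_3\overline{\phi_j})_{j\in\mathcal J}$. Then $$TD^{\Lambda_W}=D^{\overline\Lambda_W}T.$$ In particular, $D^{\Lambda_W}$ and $D^{\overline\Lambda_W}$ are (antilinearly) similar.
   Context: Let $m\ge0$. A finite oriented metric graph $\mathbf G$ has a finite nonempty vertex set $\mathcal V$, finite sets $\mathcal I$ (internal) and $\mathcal E$ (external) of edges, $\mathcal J=\mathcal I\cup\mathcal E\ne\emptyset$, no loops. Each internal edge $i$ has initial vertex $\partial_-i$ and terminal vertex $\partial_+i$ and is identified with $I_i=(a_i,b_i)$, $a_i\leftrightarrow\partial_-i$, $b_i\leftrightarrow\partial_+i$. An external edge $e$ attached to a vertex is identified with $(a_e,+\infty)$ ($\rho(e)=-1$) or $(-\infty,b_e)$ ($\rho(e)=1$); $\partial e$ is the finite endpoint. $\mathscr H=\bigoplus_jL^2(I_j;\mathbb C^2)$, $\widetilde H^1(\mathbf G;\mathbb C^2)=\bigoplus_jH^1(I_j;\mathbb C^2)$, $\Phi=(\phi_j)_j$,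 $\phi_j=(\phi_j^1,\phi_j^2)^T$; $D^{max}$ acts edgewise by $-i\sigma_1\phi_j'+m\sigma_3\phi_j$ ($\sigma_1=\begin{pmatrix}0&1\\1&0\end{pmatrix}$, $\sigma_3=\operatorname{diag}(1,-1)$). $\mathcal G=\bigoplus_j\mathcal G_j$, $\mathcal G_i=\mathbb C^2$, $\mathcal G_e=\mathbb C$; $\Gamma^k=\bigoplus_j\Gamma^k_j$, $\Gamma^1_i\Phi=(\phi_i^1(a_i),\phi_i^1(b_i))^T$, $\Gamma^2_i\Phi=(i\phi_i^2(a_i),-i\phi_i^2(b_i))^T$, $\Gamma^1_e\Phi=\phi_e^1(\partial e)$, $\Gamma^2_e\Phi=-i\rho(e)\phi^2_e(\partial e)$. Vertex space $\mathcal F=\bigoplus_v\mathbb C^{\deg v}$. Coordinates of $\mathcal G$ and $\mathcal F$ are labelled by the pairs $(j,v)$, $v$ a vertex endpoint of $j$: in $\mathcal G$ ordered edge by edge (for internal edges the pair with the initial vertex first), in $\mathcal F$ vertex by vertex and within a vertex by the fixed edge order; $W:\mathcal G\to\mathcal F$ is the permutation matrix sending coordinate $(j,v)$ of $\mathcal G$ to coordinate $(j,v)$ of $\mathcal F$. *)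

From mathcomp Require Import all_boot all_order all_algebra.
From mathcomp Require Import all_classical all_reals all_analysis.
From mathcomp Require Import complex.

Set Implicit Arguments.
Unset Strict Implicit.
Unset Printing Implicit Defensive.

Import Order.TTheory GRing.Theory Num.Theory.
Local Open Scope classical_set_scope.
Local Open Scope ring_scope.
Local Open Scope complex_scope.

Section DiracGraph.
Variable R : realType.
Local Notation C := (R[i]).

(* Graph data:
   V vertices, I internal edges, E external edges;
   src i = initial vertex, tgt i = terminal vertex of internal edge i;
   att e = vertex to which the external edge e is attached;
   internal edge i is identified with (a i, b i);
   external edge e: if rpos e (rho(e)=1) it is (-oo, pe e), otherwise
   (rho(e)=-1) it is (pe e, +oo); in both cases pe e is its finite endpoint. *)
Variables (V I E : finType) (src tgt : I -> V) (att : E -> V)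
  (a b : I -> R) (pe : E -> R) (rpos : E -> bool) (m : R).

Definition edgeJ : finType := (I + E)%type.

Definition rho (e : E) : R := if rpos e then 1 else -1.

Definition edge_itv (j : edgeJ) : set R :=
  match j with
  | inl i => [set` `](a i), (b i)[]
  | inr e => if rpos e then [set` `]-oo, (pe e)[] else [set` `](pe e), +oo[]
  end.

(* their closures (where the continuous H^1 representative lives) *)
Definition edge_cl (j : edgeJ) : set R :=
  match j with
  | inl i => [set` `[(a i), (b i)]]
  | inr e => if rpos e then [set` `]-oo, (pe e)]] else [set` `[(pe e), +oo[]
  end.

Definition L2on (A : set R) (f : R -> C) : Prop :=
  measurable_fun A (fun x => complex.Re (f x)) /\
  measurable_fun A (fun x => complex.Im (f x)) /\
  (\int[lebesgue_measure]_(x in A) (((complex.Re (f x)) ^+ 2 + (complex.Im (f x)) ^+ 2)%:E)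
     < +oo)%E.

Definition cint (A : set R) (g : R -> C) : C :=
  (Rintegral lebesgue_measure A (fun x => complex.Re (g x))) +i*
  (Rintegral lebesgue_measure A (fun x => complex.Im (g x))).

(* f is the continuous (absolutely continuous up to the closure Acl)
   representative of an element of H^1(A) with weak derivative g *)
Definition H1_with_deriv (A Acl : set R) (f g : R -> C) : Prop :=
  L2on A f /\ L2on A g /\
  (forall x y, Acl x -> Acl y -> y <= x -> f x - f y = cint [set` `[y, x]] g).

(* coordinates of the vertex space F: pairs (j, v), v a vertex endpoint of j *)
Definition is_end (j : edgeJ) (v : V) : bool :=
  match j with
  | inl i => (v == src i) || (v == tgt i)
  | inr e => v == att e
  end.

Definition Fcoord : finType := {p : (edgeJ * V)%type | is_end p.1 p.2}.

(* vectors in F (= \oplus_v C^{deg v}), indexed by their coordinates *)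
Definition Fvec := Fcoord -> C.

Definition gfun := edgeJ -> R -> C * C.

Definition WGamma1 (Phi : gfun) : Fvec := fun p =>
  let: (j, v) := val p in
  match j with
  | inl i => if v == src i then (Phi (inl i) (a i)).1 else (Phi (inl i) (b i)).1
  | inr e => (Phi (inr e) (pe e)).1
  end.

Definition WGamma2 (Phi : gfun) : Fvec := fun p =>
  let: (j, v) := val p in
  match j with
  | inl i => if v == src i then 'i * (Phi (inl i) (a i)).2
             else - 'i * (Phi (inl i) (b i)).2
  | inr e => - 'i * (rho e)%:C * (Phi (inr e) (pe e)).2
  end.

(* the Dirac expression  -i sigma_1 phi' + m sigma_3 phi *)
Definition dirac_expr (phi dphi : C * C) : C * C :=
  (- 'i * dphi.2 + m%:C * phi.1, - 'i * dphi.1 - m%:C * phi.2).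

(* Graph of the operator D^{Theta_W}, on representatives of L^2 classes:
   Dgraph Theta Phi Psi  <->  Phi (an L^2 class) lies in the domain of
   D^{Theta_W} and Psi = D^{Theta_W} Phi in L^2. *)
Definition Dgraph (Theta : set (Fvec * Fvec)) (Phi Psi : gfun) : Prop :=
  exists Phi0 dPhi0 : gfun,
    (forall j, {ae lebesgue_measure, forall x,
                 edge_itv j x -> Phi0 j x = Phi j x}) /\
    (forall j, H1_with_deriv (edge_itv j) (edge_cl j)
                 (fun x => (Phi0 j x).1) (fun x => (dPhi0 j x).1) /\
               H1_with_deriv (edge_itv j) (edge_cl j)
                 (fun x => (Phi0 j x).2) (fun x => (dPhi0 j x).2)) /\
    Theta (WGamma1 Phi0, WGamma2 Phi0) /\
    (forall j, {ae lebesgue_measure, forall x,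
                 edge_itv j x -> Psi j x = dirac_expr (Phi0 j x) (dPhi0 j x)}).

(* equality in the Hilbert space: a.e. on every edge *)
Definition L2eq (Phi Psi : gfun) : Prop :=
  forall j, {ae lebesgue_measure, forall x, edge_itv j x -> Phi j x = Psi j x}.

End DiracGraph.

Definition Tmap (R : realType) (J : Type) (Phi : J -> R -> R[i] * R[i]) :
  J -> R -> R[i] * R[i] :=
  fun j x => (((Phi j x).1)^*, - ((Phi j x).2)^*)%C.

Definition conj_rel (R : realType) (K : Type) (L : set ((K -> R[i]) * (K -> R[i])))
  : set ((K -> R[i]) * (K -> R[i])) :=
  (fun p => (fun k => ((p.1 k)^*)%C, fun k => ((p.2 k)^*)%C)) @` L.

Definition linear_relation (R : realType) (K : Type)
  (L : set ((K -> R[i]) * (K -> R[i]))) : Prop :=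
  L (fun _ => 0, fun _ => 0) /\
  (forall p q, L p -> L q ->
     L (fun k => p.1 k + q.1 k, fun k => p.2 k + q.2 k)) /\
  (forall (c : R[i]) p, L p -> L (fun k => c * p.1 k, fun k => c * p.2 k)).

From mathcomp Require Import all_boot all_order all_algebra.
From mathcomp Require Import all_classical all_reals all_analysis.
From mathcomp Require Import complex ring measurable_realfun.
Import Order.TTheory GRing.Theory Num.Theory.
Local Open Scope classical_set_scope.
Local Open Scope ring_scope.
Local Open Scope complex_scope.

(* Conjugation
   commutes with the Lebesgue integral, so it maps H^1 functions to H^1
   functions, conjugating their weak derivatives.  At the vertices,
   W Gamma^1 (T Phi) and W Gamma^2 (T Phi) are the conjugates of
   W Gamma^1 Phi and W Gamma^2 Phi, because the sign that sigma_3 puts on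
   phi^2 is exactly the sign conjugation puts on the factor i in Gamma^2.
   Since sigma_3 anticommutes with sigma_1 and conjugation turns -i into i,
   the Dirac expression commutes with T pointwise.  So T maps the graph of
   D^{Lambda_W} into that of D^{conj Lambda_W}; T is an involution, which
   gives the reverse inclusion. *)

Section ComplexParts.
Variable K : pzRingType.

Lemma Re_conjc (z : K[i]) : complex.Re z^* = complex.Re z. Proof. by case: z. Qed.
Lemma Im_conjc (z : K[i]) : complex.Im z^* = - complex.Im z. Proof. by case: z. Qed.
Lemma Re_oppc (z : K[i]) : complex.Re (- z) = - complex.Re z. Proof. by case: z. Qed.
Lemma Im_oppc (z : K[i]) : complex.Im (- z) = - complex.Im z. Proof. by case: z. Qed.

Lemma complex_ext (x y : K[i]) :
  complex.Re x = complex.Re y -> complex.Im x = complex.Im y -> x = y.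
Proof. by case: x => ? ?; case: y => ? ? /= -> ->. Qed.

End ComplexParts.

Lemma conjcM_imaginary (K : rcfType) (c z : K[i]) :
  complex.Re c = 0 -> (c * z)^* = c * - z^*.
Proof.
by case: c z => [? ?] [? ?] /= c0; apply: complex_ext => /=; rewrite c0; ring.
Qed.

(* No integrability is needed: [fine] sends every infinite value to 0. *)
Lemma RintegralN d (T : measurableType d) (R : realType)
    (mu : {measure set T -> \bar R}) (D : set T) (h : T -> R) :
  \int[mu]_(x in D) - h x = - \int[mu]_(x in D) h x.
Proof.
rewrite /Rintegral; under eq_integral do rewrite EFinN.
rewrite [X in fine X]integralE [X in - fine X]integralE.
rewrite (funeposN (EFin \o h)) (funenegN (EFin \o h)).
have := integral_ge0 mu (D := D) (fun x _ => funepos_ge0 (EFin \o h) x).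
have := integral_ge0 mu (D := D) (fun x _ => funeneg_ge0 (EFin \o h) x).
case: (integral _ _ _) => [p| |]; case: (integral _ _ _) => [n| |] //= _ _;
  by rewrite ?opprB ?oppr0.
Qed.

Section ComplexIntegration.
Variable R : realType.
Implicit Types (A : set R) (f g : R -> R[i]).

Lemma L2on_conj A f : L2on A f -> L2on A (fun x => (f x)^*).
Proof.
case=> mRe [mIm fin]; split; first by under eq_fun do rewrite Re_conjc.
split; first by under eq_fun do rewrite Im_conjc; exact: measurable_funN.
by under eq_integral do rewrite Re_conjc Im_conjc sqrrN.
Qed.

Lemma L2on_opp A f : L2on A f -> L2on A (fun x => - f x).
Proof.
case=> mRe [mIm fin].
split; first by under eq_fun do rewrite Re_oppc; exact: measurable_funN.
split; first by under eq_fun do rewrite Im_oppc; exact: measurable_funN.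
by under eq_integral do rewrite Re_oppc Im_oppc !sqrrN.
Qed.

Lemma cint_conj A g : cint A (fun x => (g x)^*) = (cint A g)^*.
Proof.
rewrite /cint /conjc -RintegralN.
by congr (_ +i* _); apply: eq_Rintegral => x _; rewrite (Re_conjc, Im_conjc).
Qed.

Lemma cint_opp A g : cint A (fun x => - g x) = - cint A g.
Proof.
rewrite /cint -[- (_ +i* _)]/(_ +i* _) -!RintegralN.
by congr (_ +i* _); apply: eq_Rintegral => x _; rewrite (Re_oppc, Im_oppc).
Qed.

Lemma H1_with_deriv_conj A (Acl : set R) f g :
  H1_with_deriv A Acl f g ->
  H1_with_deriv A Acl (fun x => (f x)^*) (fun x => (g x)^*).
Proof.
case=> Lf [Lg ftc]; split; first exact: L2on_conj.
split; first exact: L2on_conj.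
by move=> x y Ax Ay yx; rewrite cint_conj -ftc // rmorphB.
Qed.

Lemma H1_with_deriv_opp A (Acl : set R) f g :
  H1_with_deriv A Acl f g ->
  H1_with_deriv A Acl (fun x => - f x) (fun x => - g x).
Proof.
case=> Lf [Lg ftc]; split; first exact: L2on_opp.
split; first exact: L2on_opp.
by move=> x y Ax Ay yx; rewrite cint_opp -ftc // opprD.
Qed.

End ComplexIntegration.

Lemma conj_relK (R : realType) (K : Type) (L : set ((K -> R[i]) * (K -> R[i]))) :
  conj_rel (conj_rel L) = L.
Proof.
rewrite /conj_rel image_comp -[RHS]image_id; apply: eq_imagel => -[p q] _ /=.
by congr pair; apply: funext => k; rewrite conjcK.
Qed.

Definition sigma3_conj {K : rcfType} (p : K[i] * K[i]) : K[i] * K[i] :=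
  (p.1^*, - p.2^*).

Lemma sigma3_conjK (K : rcfType) : involutive (@sigma3_conj K).
Proof. by case=> -[? ?] [? ?]; congr pair; apply: complex_ext => /=; ring. Qed.

Lemma TmapK (R : realType) (J : Type) : involutive (@Tmap R J).
Proof. by move=> Phi; apply: funext => j; apply: funext => x; exact: sigma3_conjK. Qed.

Lemma dirac_expr_sigma3_conj (R : realType) (m : R) (phi dphi : R[i] * R[i]) :
  dirac_expr m (sigma3_conj phi) (sigma3_conj dphi) =
  sigma3_conj (dirac_expr m phi dphi).
Proof.
case: phi dphi => -[? ?] [? ?] [[? ?] [? ?]].
by congr pair; apply: complex_ext => /=; ring.
Qed.

Section ConjugationSymmetry.
Variables (R : realType) (V I E : finType) (src tgt : I -> V) (att : E -> V)
  (a b : I -> R) (pe : E -> R) (rpos : E -> bool) (m : R).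

Local Notation Gamma1 := (WGamma1 (src := src) (tgt := tgt) (att := att) a b pe).
Local Notation Gamma2 := (WGamma2 (src := src) (tgt := tgt) (att := att) a b pe rpos).
Local Notation Dgraph := (Dgraph a b pe rpos m).
Local Notation L2eq := (L2eq a b pe rpos).

(* The library's [Hint Extern] for ae filters does not fire on [lebesgue_measure]. *)
#[local] Instance lebesgue_ae_filter :
  Filter (almost_everywhere (@lebesgue_measure R)) := ae_filter_ringOfSetsType _.

Local Notation vertex_relation :=
  (set ((Fcoord src tgt att -> R[i]) * (Fcoord src tgt att -> R[i]))).

Lemma WGamma1_Tmap (Phi : gfun R I E) : Gamma1 (Tmap Phi) = fun k => (Gamma1 Phi k)^*.
Proof. by apply: funext => -[[[i|e] v] hp]; rewrite /WGamma1 /=; [case: ifP|]. Qed.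

Lemma WGamma2_Tmap (Phi : gfun R I E) : Gamma2 (Tmap Phi) = fun k => (Gamma2 Phi k)^*.
Proof.
apply: funext => -[[[i|e] v] hp]; rewrite /WGamma2 /=; [case: ifP => _|];
  by rewrite conjcM_imaginary //=; ring.
Qed.

Lemma Dgraph_Tmap (Theta : vertex_relation) (Phi Psi : gfun R I E) :
  Dgraph Theta Phi Psi -> Dgraph (conj_rel Theta) (Tmap Phi) (Tmap Psi).
Proof.
case=> Phi0 [dPhi0 [Phi0E [H1Phi0 [bcPhi0 Psi0E]]]].
exists (Tmap Phi0), (Tmap dPhi0); split; [|split; [|split]].
- by move=> j; near=> x => Ix; rewrite /Tmap (near (Phi0E j)).
- move=> j; have [H1_1 H1_2] := H1Phi0 j.
  by split; [exact: H1_with_deriv_conj | exact/H1_with_deriv_opp/H1_with_deriv_conj].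
- by rewrite WGamma1_Tmap WGamma2_Tmap; exists (Gamma1 Phi0, Gamma2 Phi0).
- move=> j; near=> x => Ix.
  rewrite -[Tmap Psi j x]/(sigma3_conj (Psi j x)) (near (Psi0E j)) //.
  exact/esym/dirac_expr_sigma3_conj.
Unshelve. all: by end_near.
Qed.

Lemma Dgraph_L2eq (Theta : vertex_relation) (Phi Psi Psi' : gfun R I E) :
  Dgraph Theta Phi Psi -> L2eq Psi' Psi -> Dgraph Theta Phi Psi'.
Proof.
case=> Phi0 [dPhi0 [? [? [? Psi0E]]]] eqPsi.
exists Phi0, dPhi0; do 3 split=> //.
by move=> j; near=> x => Ix; rewrite (near (eqPsi j)) ?(near (Psi0E j)).
Unshelve. all: by end_near.
Qed.

End ConjugationSymmetry.

Theorem theorem4p14 (R : realType) (V I E : finType)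
  (src tgt : I -> V) (att : E -> V) (a b : I -> R) (pe : E -> R)
  (rpos : E -> bool) (m : R)
  (hV : (0 < #|V|)%N) (hJ : (0 < #|I| + #|E|)%N)
  (hnoloop : forall i, src i != tgt i)
  (hab : forall i, a i < b i) (hm : 0 <= m)
  (Lambda : set ((Fcoord src tgt att -> R[i]) * (Fcoord src tgt att -> R[i])))
  (hLambda : linear_relation Lambda) :
  forall Phi Chi : gfun R I E,
    (exists Psi : gfun R I E,
        Dgraph a b pe rpos m Lambda Phi Psi /\
        L2eq a b pe rpos Chi (Tmap Psi))
    <->
    Dgraph a b pe rpos m (conj_rel Lambda) (Tmap Phi) Chi.
Proof.
move=> Phi Chi; split.
  by case=> Psi [DPsi eqChi]; apply: Dgraph_L2eq eqChi; exact: Dgraph_Tmap.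
move=> DChi; exists (Tmap Chi); split.
  by rewrite -[Phi]TmapK -[Lambda]conj_relK; exact: Dgraph_Tmap.
by rewrite TmapK => j; apply: aeW.
Qed.
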